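(* Let $\langle E,\rightarrow\rangle$ be a computation and $b$ a regular predicate. For events $e,f$, $J_b(e)\subseteq J_b(f)$ if and only if there is a directed path from $e$ to $f$ in the graph $S_b(E)$.
   Context: A computation is a directed graph $\langle E, \rightarrow\rangle$ whose vertices (events) are partitioned among processes $p_1,\dots,p_n$; events on each process are totally ordered, each process $p_i$ has an initial event $\bot_i$ (first) and final event $\top_i$ (last), the path relation contains Lamport's happened-before relation (in particular there is a path from each event to its successor on the same process), all initial events lie in one strongly connected component and all final events in one strongly connected component. $\top$ is the set of final events and $\mathrm{succ}(e)$ the successor of $e$ on its process. A subset $C\subseteq E$ is a consistent cut if for every edge $(u,v)$, $v\in C$ implies $u\in C$. A predicate is regular if whenever consistent cuts $C_1,C_2$ satisfy it, so do $C_1\cap C_2$ and $C_1\cup C_2$ (trivial cuts $\emptyset,E$ treated as satisfying $b$). $J_b(e)$ is the least consistent cut of $\langle E,\rightarrow\rangle$ that satisfies $b$ and contains $e$, or $E$ if none exists or $e\in\top$. $F_b(e)$ is the vector whose $i$-th entry is the earliest event $g$ on $p_i$ with $J_b(e)\subseteq J_b(g)$. The graph $S_b(E)$ has vertex set $E$ and edges: from each $e\notin\top$ to $\mathrm{succ}(e)$, and from each event $e$ to $F_b(e)[i]$ for each process $p_i$. Each vertex has a (trivial) path to itself. *)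

From mathcomp Require Import all_boot.
Set Implicit Arguments.
Unset Strict Implicit.
Unset Printing Implicit Defensive.

Section Computation.
Variables (n : nat) (E : finType).
(* proc e : the process of e;  pos e : the position of e on its process
   (0 = initial event);  edge : the edge relation of the computation graph. *)
Variables (proc : E -> 'I_n) (pos : E -> nat) (edge : rel E).

Definition final (e : E) : bool :=
  [forall f, (proc f == proc e) ==> (pos f <= pos e)].

Definition is_succ (e f : E) : bool :=
  (proc f == proc e) && (pos f == (pos e).+1).

Definition is_computation : Prop :=
      (forall e f, proc e = proc f -> pos e = pos f -> e = f) /\
      (forall e k, k < pos e -> exists f, proc f = proc e /\ pos f = k) /\
      (forall i : 'I_n, exists e, proc e = i) /\
      (forall e f, is_succ e f -> connect edge e f) /\
      (forall e f, pos e = 0 -> pos f = 0 -> connect edge e f) /\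
      (forall e f, final e -> final f -> connect edge e f).

Definition consistent (C : {set E}) : bool :=
  [forall u, forall v, edge u v ==> (v \in C) ==> (u \in C)].

Variable b : {set E} -> bool.

(* b, with the trivial cuts treated as satisfying b *)
Definition satb (C : {set E}) : bool := [|| C == set0, C == setT | b C].

Definition regular : Prop :=
  forall C1 C2 : {set E}, consistent C1 -> consistent C2 ->
    satb C1 -> satb C2 -> satb (C1 :&: C2) /\ satb (C1 :|: C2).

Definition Jcand (e : E) (C : {set E}) : bool :=
  [&& consistent C, satb C & e \in C].

(* J_b(e): least consistent cut satisfying b containing e, or E if none
   exists or e is final *)
Definition J (e : E) : {set E} :=
  if final e then setT
  else match [pick C | Jcand e C && [forall D, Jcand e D ==> (C \subset D)]] with
       | Some C => C
       | None => setT
       end.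

(* F_b(e)[i]: earliest event g on p_i with J(e) \subset J(g)
   (None only if no such event exists, which does not happen) *)
Definition F (e : E) (i : 'I_n) : option E :=
  [pick g | [&& proc g == i, J e \subset J g &
     [forall h, ((proc h == i) && (J e \subset J h)) ==> (pos g <= pos h)]]].

Definition Sedge (e f : E) : bool :=
  (~~ final e && is_succ e f) || [exists i, F e i == Some f].

End Computation.

From mathcomp Require Import all_boot.

Set Implicit Arguments.
Unset Strict Implicit.
Unset Printing Implicit Defensive.

(* Regularity makes the consistent cuts that satisfy b and contain a given
   event closed under intersection, so J_b(e) is the least of them.  Hence J_b
   is monotone along the edges of the computation, and by the choice of F_b
   along every edge of S_b(E); this gives the direction from paths to
   inclusions.  Conversely, if J_b(e) <= J_b(f), the edge from e to F_b(e)[i],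
   with p_i the process of f, reaches an event of p_i no later than f, from
   which successor edges lead to f. *)

Lemma consistent_connect (E : finType) (edge : rel E) (C : {set E}) u v :
  consistent edge C -> connect edge u v -> v \in C -> u \in C.
Proof.
move=> /forallP C_cons /connectP [p u_p ->] {v}.
elim: p u u_p => [|w p IHp] u //= /andP [uw w_p] /(IHp w w_p) wC.
by move/forallP: (C_cons u) => /(_ w); rewrite uw wC.
Qed.

Lemma consistentI (E : finType) (edge : rel E) (C D : {set E}) :
  consistent edge C -> consistent edge D -> consistent edge (C :&: D).
Proof.
move=> /forallP C_cons /forallP D_cons.
apply/forallP => u; apply/forallP => v; apply/implyP => uv.
apply/implyP; rewrite !inE => /andP [vC vD].
move/forallP: (C_cons u) => /(_ v); rewrite uv vC => /= ->.
by move/forallP: (D_cons u) => /(_ v); rewrite uv vD.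
Qed.

Lemma consistentT (E : finType) (edge : rel E) : consistent edge [set: E].
Proof. by apply/forallP => u; apply/forallP => v; rewrite !in_setT !implybT. Qed.

Lemma exists_least_setI_closed (T : finType) (P : pred {set T}) (A0 : {set T}) :
  (forall A B, P A -> P B -> P (A :&: B)) -> P A0 ->
  exists A, P A && [forall B, P B ==> (A \subset B)].
Proof.
move=> PI PA0; case: (arg_minnP (fun A : {set T} => #|A|) PA0) => A PA A_min.
exists A; rewrite PA; apply/forallP => B; apply/implyP => PB.
have /eqP <- : A :&: B == A by rewrite eqEcard subsetIl A_min ?PI.
exact: subsetIr.
Qed.

Section LeastCuts.

Variables (n : nat) (E : finType) (proc : E -> 'I_n) (pos : E -> nat).
Variables (edge : rel E) (b : {set E} -> bool).

Local Notation Jb := (J proc pos edge b).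
Local Notation Fb := (F proc pos edge b).
Local Notation Sb := (Sedge proc pos edge b).

Hypothesis b_regular : regular edge b.

Lemma JcandI e C D : Jcand edge b e C -> Jcand edge b e D -> Jcand edge b e (C :&: D).
Proof.
move=> /and3P [C_cons C_sat eC] /and3P [D_cons D_sat eD].
rewrite /Jcand consistentI //= inE eC eD andbT.
by have [-> _] := b_regular C_cons D_cons C_sat D_sat.
Qed.

Lemma JcandT e : Jcand edge b e [set: E].
Proof. by rewrite /Jcand consistentT /satb eqxx orbT in_setT. Qed.

Lemma J_spec e : ~~ final proc pos e ->
  Jcand edge b e (Jb e) /\ forall D, Jcand edge b e D -> Jb e \subset D.
Proof.
rewrite /J => /negbTE ->; case: pickP => [C /andP [Ccand /forallP C_least] | no_least].
  by split=> // D /(implyP (C_least D)).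
have [C C_least] := exists_least_setI_closed (@JcandI e) (JcandT e).
by rewrite no_least in C_least.
Qed.

Lemma J_subset_connect x y :
  connect edge x y -> ~~ final proc pos x -> Jb x \subset Jb y.
Proof.
move=> xy x_nfinal; have [_ Jx_least] := J_spec x_nfinal.
case y_final: (final proc pos y); first by rewrite /J y_final subsetT.
have [/and3P [y_cons y_sat yJ] _] := J_spec (negbT y_final).
by apply: Jx_least; rewrite /Jcand y_cons y_sat (consistent_connect y_cons xy yJ).
Qed.

Lemma F_spec e i g : Fb e i = Some g ->
  [/\ proc g = i, Jb e \subset Jb g &
      forall h, proc h = i -> Jb e \subset Jb h -> pos g <= pos h].
Proof.
rewrite /F; case: pickP => // g' /and3P [/eqP gi eg /forallP g_least] [<-].
by split=> // h hi eh; move: (g_least h); rewrite hi eqxx eh.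
Qed.

Lemma F_total e i g0 : proc g0 = i -> Jb e \subset Jb g0 -> exists g, Fb e i = Some g.
Proof.
move=> g0i eg0; rewrite /F; case: pickP => [g _ | no_least]; first by exists g.
have P_g0 : [pred h | (proc h == i) && (Jb e \subset Jb h)] g0 by rewrite /= g0i eqxx.
case: (arg_minnP pos P_g0) => g /andP [gi eg] g_least.
suff g_least' : [forall h, (proc h == i) && (Jb e \subset Jb h) ==> (pos g <= pos h)].
  by move: (no_least g); rewrite gi eg g_least'.
by apply/forallP => h; apply/implyP => /g_least.
Qed.

Hypothesis succ_connect : forall e f, is_succ proc pos e f -> connect edge e f.

Lemma J_subset_Sedge x y : Sb x y -> Jb x \subset Jb y.
Proof.
case/orP => [/andP [x_nfinal xy] | /existsP [i /eqP /F_spec []//]].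
exact: J_subset_connect (succ_connect xy) x_nfinal.
Qed.

Lemma J_subset_connect_Sedge x y : connect Sb x y -> Jb x \subset Jb y.
Proof.
case/connectP => p x_p ->; elim: p x x_p => [|w p IHp] x /=; first by rewrite subxx.
by case/andP => /J_subset_Sedge xw /IHp; apply: subset_trans.
Qed.

End LeastCuts.

Section Completeness.

Variables (n : nat) (E : finType) (proc : E -> 'I_n) (pos : E -> nat).
Variables (edge : rel E) (b : {set E} -> bool).

Local Notation Jb := (J proc pos edge b).
Local Notation Sb := (Sedge proc pos edge b).

Hypothesis pos_inj : forall e f, proc e = proc f -> pos e = pos f -> e = f.
Hypothesis pos_contiguous :
  forall e k, k < pos e -> exists f, proc f = proc e /\ pos f = k.

Lemma not_final_before x y : proc y = proc x -> pos x < pos y -> ~~ final proc pos x.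
Proof. by move=> yx xy; apply/forallP => /(_ y); rewrite yx eqxx leqNgt xy. Qed.

Lemma connect_Sedge_same_proc x y : proc x = proc y -> pos x <= pos y -> connect Sb x y.
Proof.
move=> xy /subnKC; move: (pos y - pos x) => d.
elim: d y xy => [|d IHd] y xy; first by rewrite addn0 => /(pos_inj xy) ->.
move=> posy; have [z [zy posz]] : exists z, proc z = proc y /\ pos z = pos x + d.
  by apply: pos_contiguous; rewrite -posy addnS.
apply: connect_trans (IHd z _ _) (connect1 _); rewrite ?zy //.
rewrite /Sedge /is_succ zy eqxx posz -posy addnS eqxx andbT.
by rewrite (@not_final_before z y) // posz -posy addnS.
Qed.

Lemma connect_Sedge_of_J_subset e f : Jb e \subset Jb f -> connect Sb e f.
Proof.
move=> ef; have [g Feg] := F_total (erefl (proc f)) ef.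
have [gf _ g_least] := F_spec Feg.
apply: connect_trans (connect1 _) (connect_Sedge_same_proc gf (g_least f erefl ef)).
by apply/orP; right; apply/existsP; exists (proc f); rewrite Feg.
Qed.

End Completeness.

Theorem lemma7 (n : nat) (E : finType) (proc : E -> 'I_n) (pos : E -> nat) (edge : rel E)
  (b : {set E} -> bool) :
  is_computation proc pos edge -> regular edge b ->
  forall e f : E,
    (J proc pos edge b e \subset J proc pos edge b f) = connect (Sedge proc pos edge b) e f.
Proof.
move=> [pos_inj [pos_contiguous [_ [succ_connect _]]]] b_regular e f.
apply/idP/idP; first exact: connect_Sedge_of_J_subset.
exact: J_subset_connect_Sedge.
Qed.
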